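(* Let $G$ be a ribbon graph. Then (1) $P_{\langle\tau\delta\tau\rangle}(G,x)=P_{\langle\delta\rangle}(G^{\times},x)$; (2) $P_{\langle\delta,\tau\rangle}(G,x)=2^{e(G)}P_{\langle\delta\tau\rangle}(G,x)$.
   Context: A ribbon graph $G=(V(G),E(G))$ is a (orientable or non-orientable) surface with boundary, represented as the union of a set $V(G)$ of vertex discs and a set $E(G)$ of edge discs (ribbons) such that vertices and edges intersect in disjoint line segments, each such segment lies on the boundary of exactly one vertex and exactly one edge, and every edge contains exactly two such segments. $v(G)$, $e(G)$ denote the numbers of vertices and edges. For $A\subseteq E(G)$, the partial dual $G^{\delta(A)}$ is obtained by gluing a disc along each boundary component of the spanning ribbon subgraph $(V(G),A)$ (these discs become the vertex discs), removing the interiors of the original vertex discs, and keeping the edge ribbons. The partial Petrial $G^{\tau(A)}$ adds a half-twist to each edge in $A$; $G^{\times}=G^{\tau(E(G))}$ (Petrie dual, with $E(G^\times)=E(G)$). For a word $w=w_1\cdots w_n$ over $\{\delta,\tau\}$, $G^{w(A)}=(\cdots(G^{w_n(A)})^{w_{n-1}(A)}\cdots)^{w_1(A)}$ (rightmost letter applied first), $G^{1(A)}=G$, and $G^{\xi(A)\pi(B)}=(G^{\xi(A)})^{\pi(B)}$. Vertex polynomials (sums over ordered partitions of $E(G)$ into pairwise disjoint, possibly empty parts): $P_{\langle\delta\rangle}(G,x)=\sum_{A\subseteq E(G)}x^{v(G^{\delta(A)})}$; $P_{\langle\tau\delta\tau\rangle}(G,x)=\sum_{A\subseteq E(G)}x^{v(G^{\tau\delta\tau(A)})}$;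 $P_{\langle\delta\tau\rangle}(G,x)=\sum_{(A_1,A_2,A_3)}x^{v(G^{1(A_1)\tau\delta(A_2)\delta\tau(A_3)})}$; $P_{\langle\delta,\tau\rangle}(G,x)=\sum_{(A_1,\dots,A_6)}x^{v(G^{1(A_1)\delta(A_2)\tau(A_3)\tau\delta(A_4)\delta\tau(A_5)\tau\delta\tau(A_6)})}$. *)

(* Combinatorial (flag / "graph-encoded map") model of
   (possibly non-orientable) ribbon graphs. *)
From HB Require Import structures.
From mathcomp Require Import all_boot all_algebra.
Set Implicit Arguments.
Unset Strict Implicit.
Unset Printing Implicit Defensive.
Import GRing.Theory.
Local Open Scope ring_scope.

(* Flags = corners of edge ribbons: (edge, end, side).  Each edge ribbon is
   a rectangle with 4 corners; the labels are arbitrary names, the actual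
   structure is given by the involutions below. *)
Notation flag E := ((E * bool * bool)%type).

(* A ribbon graph with edge set E:
   - rg_iso : number of isolated vertices (vertex discs with no edge ends);
   - rg_s   : pairs the two corners of an edge lying on the same attaching
              segment (edge end glued to a vertex);
   - rg_t   : pairs the two corners of an edge joined by a side of the edge
              ribbon (a boundary arc of the edge);
   - rg_r   : pairs two corners joined by a boundary arc of a vertex disc
              not contained in any attaching segment.
   Vertex boundary circles = orbits of <rg_r, rg_s>. *)
Record ribbon_graph (E : finType) := RibbonGraph {
  rg_iso : nat;
  rg_r : flag E -> flag E;
  rg_s : flag E -> flag E;
  rg_t : flag E -> flag E }.

Definition fedge (E : finType) (x : flag E) : E := x.1.1.

Definition is_ribbon_graph (E : finType) (G : ribbon_graph E) : Prop :=
  [/\ forall x, rg_r G (rg_r G x) = x /\ rg_r G x != x,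
      forall x, rg_s G (rg_s G x) = x /\ rg_s G x != x,
      forall x, rg_t G (rg_t G x) = x /\ rg_t G x != x,
      forall x, fedge (rg_s G x) = fedge x /\ fedge (rg_t G x) = fedge x
    & forall x, rg_s G (rg_t G x) = rg_t G (rg_s G x) /\ rg_s G (rg_t G x) != x].

Definition vrel (E : finType) (G : ribbon_graph E) : rel (flag E) :=
  fun x y => (y == rg_r G x) || (y == rg_s G x).

Definition nverts (E : finType) (G : ribbon_graph E) : nat :=
  rg_iso G + n_comp (vrel G) predT.

Definition pdual (E : finType) (A : {set E}) (G : ribbon_graph E) :=
  RibbonGraph (rg_iso G) (rg_r G)
    (fun x => if fedge x \in A then rg_t G x else rg_s G x)
    (fun x => if fedge x \in A then rg_s G x else rg_t G x).

(* partial Petrial G^{tau(A)}: half-twist on each edge of A *)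
Definition ppetrial (E : finType) (A : {set E}) (G : ribbon_graph E) :=
  RibbonGraph (rg_iso G) (rg_r G) (rg_s G)
    (fun x => if fedge x \in A then rg_s G (rg_t G x) else rg_t G x).

Inductive rletter := Ldelta | Ltau.

Definition apply_letter (E : finType) (l : rletter) (A : {set E}) G :=
  match l with Ldelta => pdual A G | Ltau => ppetrial A G end.

(* G^{w(A)} with w = w_1 ... w_n : rightmost letter applied first *)
Definition apply_word (E : finType) (w : seq rletter) (A : {set E})
  (G : ribbon_graph E) : ribbon_graph E :=
  foldr (fun l H => apply_letter l A H) G w.

(* G^{xi_1(A_1) xi_2(A_2) ... } = ((G^{xi_1(A_1)})^{xi_2(A_2)})... *)
Definition apply_ops (E : finType) (l : seq (seq rletter * {set E}))
  (G : ribbon_graph E) : ribbon_graph E :=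
  foldl (fun H p => apply_word p.1 p.2 H) G l.

Definition petrie_dual (E : finType) (G : ribbon_graph E) :=
  ppetrial [set: E] G.

Definition part (E : finType) k (f : {ffun E -> 'I_k}) (i : 'I_k) : {set E} :=
  [set e | f e == i].

Definition w1 : seq rletter := [::].
Definition wd : seq rletter := [:: Ldelta].
Definition wt : seq rletter := [:: Ltau].
Definition wtd : seq rletter := [:: Ltau; Ldelta].
Definition wdt : seq rletter := [:: Ldelta; Ltau].
Definition wtdt : seq rletter := [:: Ltau; Ldelta; Ltau].

Definition P_delta (E : finType) (G : ribbon_graph E) : {poly int} :=
  \sum_(A : {set E}) 'X^(nverts (apply_word wd A G)).

Definition P_tdt (E : finType) (G : ribbon_graph E) : {poly int} :=
  \sum_(A : {set E}) 'X^(nverts (apply_word wtdt A G)).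

Definition P_dt (E : finType) (G : ribbon_graph E) : {poly int} :=
  \sum_(f : {ffun E -> 'I_3})
    'X^(nverts (apply_ops [:: (w1, part f (inord 0)); (wtd, part f (inord 1));
                             (wdt, part f (inord 2))] G)).

Definition P_d_t (E : finType) (G : ribbon_graph E) : {poly int} :=
  \sum_(f : {ffun E -> 'I_6})
    'X^(nverts (apply_ops [:: (w1, part f (inord 0)); (wd, part f (inord 1));
                             (wt, part f (inord 2)); (wtd, part f (inord 3));
                             (wdt, part f (inord 4)); (wtdt, part f (inord 5))] G)).

From mathcomp Require Import all_boot all_algebra.
Import GRing.Theory.
Local Open Scope ring_scope.
Set Implicit Arguments.
Unset Strict Implicit.

(* Every edge of a ribbon graph carries a local state: the two elements of the
   Klein group <s, t> that currently play the role of its attaching segments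
   and of its sides.  Partial duals and Petrials act edge by edge on this
   state (delta swaps the two components, tau replaces the side by the
   product of segment and side), and the vertices only depend on the segment
   component.  Identity (1) is then the observation that tau delta tau and
   delta after a global tau both turn the segment into s t.  For (2), the
   words w and tau w yield the same segment, so the six-block partitions map
   two-to-one on each edge onto the three-block ones and the vertex counts
   agree along this map. *)

Definition klein := (bool * bool)%type.

Definition kadd (a b : klein) : klein := (a.1 (+) b.1, a.2 (+) b.2).

Definition edge_state := (klein * klein)%type.

Definition letter_state (l : rletter) (c : edge_state) : edge_state :=
  match l with Ldelta => (c.2, c.1) | Ltau => (c.1, kadd c.1 c.2) end.

Definition word_state (w : seq rletter) (c : edge_state) : edge_state :=
  foldr letter_state c w.

(* The segment is s and the side is t. *)
Definition init_state : edge_state := ((true, false), (false, true)).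

Section LocalStates.
Variables (E : finType) (G : ribbon_graph E).
Hypothesis HG : is_ribbon_graph G.

(* [(a, b)] acts on flags as s^a t^b. *)
Definition kact (k : klein) (x : flag E) : flag E :=
  let y := if k.2 then rg_t G x else x in if k.1 then rg_s G y else y.

Lemma fedge_kact k x : fedge (kact k x) = fedge x.
Proof.
case: HG => _ _ _ fedge_st _; rewrite /kact.
by case: k => [[] []] /=; rewrite ?(fedge_st _).1 ?(fedge_st _).2.
Qed.

Lemma kactA a b x : kact a (kact b x) = kact (kadd a b) x.
Proof.
case: HG => _ s_inv t_inv _ st_comm.
have ssK y : rg_s G (rg_s G y) = y by case: (s_inv y).
have ttK y : rg_t G (rg_t G y) = y by case: (t_inv y).
have stC y : rg_s G (rg_t G y) = rg_t G (rg_s G y) by case: (st_comm y).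
rewrite /kact /kadd.
by case: a => [[] []]; case: b => [[] []] /=; rewrite ?ssK ?ttK ?stC ?ssK ?ttK.
Qed.

Definition presented_by (c : E -> edge_state) (H : ribbon_graph E) :=
  [/\ rg_iso H = rg_iso G, rg_r H = rg_r G &
      forall x, rg_s H x = kact (c (fedge x)).1 x /\
                rg_t H x = kact (c (fedge x)).2 x].

Lemma eq_presented c c' H : c =1 c' -> presented_by c H -> presented_by c' H.
Proof. by move=> eq_c [isoH rH stH]; split=> // x; rewrite -eq_c. Qed.

Lemma presented_init : presented_by (fun=> init_state) G.
Proof. by []. Qed.

Lemma presented_letter l (A : {set E}) c H : presented_by c H ->
  presented_by (fun e => if e \in A then letter_state l (c e) else c e)
               (apply_letter l A H).
Proof.
case=> isoH rH stH; split; try by case: l.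
move=> x; case: l => /=; case: (fedge x \in A) => //; case: (stH x) => -> -> //.
by rewrite (stH _).1 fedge_kact kactA.
Qed.

Lemma presented_word w (A : {set E}) c H : presented_by c H ->
  presented_by (fun e => if e \in A then word_state w (c e) else c e)
               (apply_word w A H).
Proof.
elim: w => [|l w IHw] cH /=; first by apply: eq_presented cH => e; case: ifP.
by apply: eq_presented (presented_letter l A (IHw cH)) => e; case: (e \in A).
Qed.

Definition ops_state (L : seq (seq rletter * {set E})) e (c : edge_state) :=
  foldl (fun c w => word_state w c) c
        [seq p.1 | p : seq rletter * {set E} <- L & e \in p.2].

Lemma presented_ops L c H : presented_by c H ->
  presented_by (fun e => ops_state L e (c e)) (apply_ops L H).
Proof.
elim: L c H => [|[w A] L IHL] c H cH //=.
apply: eq_presented (IHL _ _ (presented_word w A cH)) => e.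
by rewrite /ops_state /=; case: ifP.
Qed.

Lemma ops_state_partition n ws (f : {ffun E -> 'I_n.+1}) e c :
  ops_state [seq (nth [::] ws j, part f (inord j)) | j <- iota 0 n.+1] e c =
  word_state (nth [::] ws (f e)) c.
Proof.
rewrite /ops_state filter_map -map_comp.
set blocks := filter _ _; suff -> : blocks = [:: val (f e)] by [].
rewrite -(filter_pred1_uniq (iota_uniq 0 n.+1)) ?mem_iota ?ltn_ord //.
apply: eq_in_filter => j; rewrite mem_iota /= inE /part => ltjn.
by rewrite -val_eqE /= inordK // eq_sym.
Qed.

Lemma presented_partition n (ws : seq (seq rletter)) (f : {ffun E -> 'I_n.+1}) :
  presented_by (fun e => word_state (nth [::] ws (f e)) init_state)
    (apply_ops [seq (nth [::] ws j, part f (inord j)) | j <- iota 0 n.+1] G).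
Proof.
apply: eq_presented (presented_ops _ presented_init) => e.
exact: ops_state_partition.
Qed.

Lemma nverts_presented c c' H H' : presented_by c H -> presented_by c' H' ->
  (forall e, (c e).1 = (c' e).1) -> nverts H = nverts H'.
Proof.
case=> isoH rH stH [isoH' rH' stH'] segment_eq.
rewrite /nverts isoH isoH'; congr (_ + _)%N.
apply: eq_n_comp; apply: eq_connect => x y.
by rewrite /vrel rH rH' (stH x).1 (stH' x).1 segment_eq.
Qed.

End LocalStates.

Lemma sum_ffun_comp_fibration (E I J : finType) (R : pzSemiRingType)
    (h : I -> J) (k : nat) (F : {ffun E -> J} -> R) :
  (forall j, #|[pred i | h i == j]| = k) ->
  \sum_(f : {ffun E -> I}) F [ffun e => h (f e)] =
  (k ^ #|E|)%:R * \sum_(g : {ffun E -> J}) F g.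
Proof.
move=> fiber_k.
rewrite (partition_big (fun f : {ffun E -> I} => [ffun e => h (f e)]) predT)//=.
rewrite mulr_sumr; apply: eq_bigr => g _.
rewrite (eq_bigr (fun=> F g)) => [|f /eqP <- //].
rewrite sumr_const mulr_natl; congr (_ *+ _).
have fiber_family : [pred f : {ffun E -> I} | [ffun e => h (f e)] == g] =i
                    family (fun e => [pred i | h i == g e]).
  move=> f; rewrite !inE; apply/eqP/familyP => [<- e | hf].
    by rewrite inE ffunE.
  by apply/ffunP => e; rewrite ffunE; apply/eqP/hf.
rewrite (eq_card fiber_family) card_family /image_mem (@eq_map _ _ _ (fun=> k)).
  by rewrite cardE; elim: (enum E) => //= _ s ->; rewrite expnS.
by move=> e; apply: fiber_k.
Qed.

Lemma P_tdt_petrie_dual (E : finType) (G : ribbon_graph E) :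
  is_ribbon_graph G -> P_tdt G = P_delta (petrie_dual G).
Proof.
move=> HG; apply: eq_bigr => A _; congr 'X^_.
have petrie :
    presented_by G (fun=> letter_state Ltau init_state) (petrie_dual G).
  apply: eq_presented (presented_letter HG Ltau [set: E] (presented_init G)).
  by move=> e; rewrite inE.
apply: (nverts_presented (presented_word HG wtdt A (presented_init G))
                           (presented_word HG wd A petrie)) => e.
by case: (e \in A).
Qed.

Definition words6 : seq (seq rletter) := [:: w1; wd; wt; wtd; wdt; wtdt].
Definition words3 : seq (seq rletter) := [:: w1; wtd; wdt].

Definition block6_to_3 (i : 'I_6) : 'I_3 :=
  inord (nth 0 [:: 0; 1; 0; 1; 2; 2] i)%N.

Lemma block6_to_3_fiber (j : 'I_3) : #|[pred i | block6_to_3 i == j]| = 2.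
Proof.
rewrite cardE /enum_mem -enumT /= !enum_ordSl enum_ord0 /=.
rewrite !inE -!val_eqE /block6_to_3 /=.
by case: j => [[|[|[|m]]] lt_m3]; rewrite ?inordK.
Qed.

(* The words at indices [i] and [block6_to_3 i] differ at most by a final
   tau, which does not touch the segment. *)
Lemma segment_block6_to_3 (i : 'I_6) c :
  (word_state (nth [::] words6 i) c).1 =
  (word_state (nth [::] words3 (block6_to_3 i)) c).1.
Proof.
by case: i => [[|[|[|[|[|[|m]]]]]] lt_m6] //; rewrite /block6_to_3 /= inordK.
Qed.


Lemma P_d_t_P_dt (E : finType) (G : ribbon_graph E) :
  is_ribbon_graph G -> P_d_t G = (2 ^ #|E|)%N%:R * P_dt G.
Proof.
move=> HG; rewrite /P_d_t /P_dt -(sum_ffun_comp_fibration _ block6_to_3_fiber).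
apply: eq_bigr => f _; congr 'X^_.
have merged := presented_partition HG words3 [ffun e => block6_to_3 (f e)].
apply: (nverts_presented (presented_partition HG words6 f) merged) => e.
by rewrite ffunE segment_block6_to_3.
Qed.

Theorem mainTheorem3 (E : finType) (G : ribbon_graph E) :
  is_ribbon_graph G ->
  P_tdt G = P_delta (petrie_dual G) /\
  P_d_t G = (2 ^ #|E|)%N%:R * P_dt G.
Proof. by move=> HG; split; [exact: P_tdt_petrie_dual | exact: P_d_t_P_dt]. Qed.
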